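(* Let $n\ge1$, $m\ge0$, and let $\mathfrak{g}\subseteq\mathfrak{gl}(2n+m)$ be the seaweed of type $\frac{2n+m}{n|m|n}$, i.e. the algebra of block lower-triangular matrices with respect to diagonal blocks of sizes $n,m,n$ (so $X_{i,j}=0$ whenever $i\le n<j$, or $i\le n+m<j$). Let $F=\sum_{i,j=1}^n p_{i,j}e_{i,j}^*\in\mathfrak{gl}(n)^*$ and $G=\sum_{i,j=1}^m q_{i,j}e_{i,j}^*\in\mathfrak{gl}(m)^*$ be arbitrary. Define $\Phi,\Phi^a\in\mathfrak{g}^*$ by $$\Phi=\sum_{i,j=1}^np_{i,j}e_{i,j}^*+\sum_{i,j=1}^mq_{i,j}e_{n+i,n+j}^*+\sum_{i,j=1}^np_{i,j}e_{n+m+i,n+m+j}^*+\sum_{i=1}^ne_{n+m+i,i}^*,$$ $$\Phi^a=\sum_{i,j=1}^np_{i,j}e_{i,j}^*+\sum_{i,j=1}^mq_{i,j}e_{n+i,n+j}^*+\sum_{i,j=1}^np_{i,j}e_{2n+m+1-i,2n+m+1-j}^*+\sum_{i=1}^ne_{2n+m+1-i,i}^*.$$ Then $\ker(B_\Phi)=\{X\oplus Y\oplus X: X\in\ker(B_F),\ Y\in\ker(B_G)\}$ and $\ker(B_{\Phi^a})=\{X\oplus Y\oplus X^R: X\in\ker(B_F),\ Y\in\ker(B_G)\}$, where $X^R=A_nXA_n$ with $A_n=\sum_{i=1}^ne_{i,n+1-i}$ (i.e. $(X^R)_{i,j}=X_{n+1-i,n+1-j}$). In particular $$\dim\ker(B_\Phi)=\dim\ker(B_{\Phi^a})=\dim\ker(B_F)+\dim\ker(B_G),$$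 where $\ker(B_F)$ is computed in $\mathfrak{gl}(n)$ and $\ker(B_G)$ in $\mathfrak{gl}(m)$.
   Context: Over $\mathbb{C}$. $e_{i,j}^*(X)=X_{i,j}$. For a Lie algebra $\mathfrak{h}$ and $f\in\mathfrak{h}^*$, $B_f(x,y)=f([x,y])$ and $\ker(B_f)=\{x\in\mathfrak{h}: f([x,y])=0\ \forall y\in\mathfrak{h}\}$. $X\oplus Y\oplus Z$ denotes the block-diagonal matrix with diagonal blocks $X,Y,Z$. When $m=0$ the middle block and $G$ are absent and $\dim\ker(B_G)=0$. *)

(* Complex numbers are R[i] = complex R for a real closed
   field R (e.g. the real numbers); the statement is quantified over every
   such R, which in particular covers C = R[i] for R the reals. *)
From HB Require Import structures.
From mathcomp Require Import all_boot all_order all_algebra.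
From mathcomp Require Export complex.
Set Implicit Arguments. Unset Strict Implicit. Unset Printing Implicit Defensive.
Import Order.TTheory GRing.Theory Num.Theory.
Local Open Scope ring_scope.

(* A linear functional f on square matrices, given by its coefficient matrix P:
   f = sum_{i,j} P i j e_{i,j}^*, i.e. f(X) = sum_{i,j} P i j * X i j. *)
Definition pairing (C : nzRingType) (k : nat) (P X : 'M[C]_k) : C :=
  \sum_(i < k) \sum_(j < k) P i j * X i j.

(* ker(B_f) inside the Lie algebra {X | L X} (a subalgebra of gl(k)):
   X in h such that f([X,Y]) = 0 for all Y in h. *)
Definition kerB (C : nzRingType) (k : nat) (L : 'M[C]_k -> Prop) (P : 'M[C]_k)
    (X : 'M[C]_k) : Prop :=
  L X /\ forall Y, L Y -> pairing P (X *m Y - Y *m X) = 0.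

Definition gl (C : nzRingType) (k : nat) : 'M[C]_k -> Prop := fun _ => True.

(* the seaweed of type (2n+m)/(n|m|n): block lower triangular w.r.t. diagonal
   blocks of sizes n, m, n.  1-based: X_{i,j}=0 when i<=n<j or i<=n+m<j;
   0-based indices: i < n <= j or i < n+m <= j. *)
Definition seaweed (C : nzRingType) (n m : nat) : 'M[C]_(n + m + n) -> Prop :=
  fun X => forall i j : 'I_(n + m + n),
    ((i < n <= j)%N || (i < n + m <= j)%N) -> X i j = 0.

Definition blockdiag3 (C : nzRingType) (n m : nat)
    (X : 'M[C]_n) (Y : 'M[C]_m) (Z : 'M[C]_n) : 'M[C]_(n + m + n) :=
  block_mx (block_mx X 0 0 Y) 0 0 Z.

(* X^R = A_n X A_n, i.e. (X^R)_{i,j} = X_{n+1-i,n+1-j} *)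
Definition revmx (C : nzRingType) (n : nat) (X : 'M[C]_n) : 'M[C]_n :=
  \matrix_(i, j) X (rev_ord i) (rev_ord j).

(* A_n = sum_i e_{i,n+1-i} (antidiagonal identity) *)
Definition antiId (C : nzRingType) (n : nat) : 'M[C]_n :=
  \matrix_(i, j) (if (i + j == n.-1)%N then 1 else 0).

(* coefficient matrix of Phi: p on blocks (1,1) and (3,3), q on block (2,2),
   and e_{n+m+i,i}^* (i = 1..n) in the lower-left block *)
Definition PhiM (C : nzRingType) (n m : nat) (P : 'M[C]_n) (Q : 'M[C]_m)
  : 'M[C]_(n + m + n) :=
  block_mx (block_mx P 0 0 Q) 0 (row_mx (1%:M : 'M[C]_n) (0 : 'M[C]_(n, m))) P.

(* coefficient matrix of Phi^a: p_{i,j} at (2n+m+1-i,2n+m+1-j), i.e. P^R on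
   block (3,3), and e_{2n+m+1-i,i}^* i.e. A_n in the lower-left corner *)
Definition PhiaM (C : nzRingType) (n m : nat) (P : 'M[C]_n) (Q : 'M[C]_m)
  : 'M[C]_(n + m + n) :=
  block_mx (block_mx P 0 0 Q) 0 (row_mx (antiId C n) (0 : 'M[C]_(n, m)))
           (revmx P).

(* S (a subspace of 'M_k) has dimension d: S is the span of d linearly
   independent matrices (the rows of B, vectorized by mxvec). *)
Definition has_dim (C : fieldType) (k : nat) (S : 'M[C]_k -> Prop) (d : nat)
  : Prop :=
  exists B : 'M[C]_(d, k * k), row_free B /\
    forall X : 'M[C]_k, S X <-> (mxvec X <= B)%MS.

Arguments gl C k : clear implicits.
Arguments seaweed C n m : clear implicits.
Arguments antiId C n : clear implicits.

(* Write an element of the seaweed in block coordinates w.r.t. n, m, n as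
     Z = [A 0 0; B Cm 0; D E F].
   Both Phi and Phi^a have a coefficient matrix of the shape
     Psi_K(P,Q) = [P 0 0; 0 Q 0; K 0 K P K^T]
   with K orthogonal (K^T K = 1): K = 1 for Phi and K = A_n (the
   anti-identity, for which K P K^T = P^R) for Phi^a.  Expanding
   Psi_K([Z,Z']) blockwise gives the three diagonal commutator pairings plus
   a trace term coupling D, E, B, F with K.  Testing it against suitable Z'
   and using the nondegeneracy of the trace form forces B = E = D = 0 and
   F = K A K^T (the step D = 0 needs 2 != 0), while the diagonal pairings
   say A in ker B_P and Cm in ker B_Q; the converse inclusion is a direct
   computation.  Hence ker B_Psi = {X (+) Y (+) K X K^T}, which is the
   direct image of ker B_P x ker B_Q under an injective linear map, so its
   dimension is the sum of the two dimensions.  The main theorem is the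
   specialization to K = 1 and K = A_n over R[i]. *)
From HB Require Import structures.
From mathcomp Require Import all_boot all_order all_algebra zify.
From mathcomp Require Import complex.
Set Implicit Arguments. Unset Strict Implicit. Unset Printing Implicit Defensive.
Import Order.TTheory GRing.Theory Num.Theory.
Local Open Scope ring_scope.

Local Notation lie X Y := (X *m Y - Y *m X).

Section TraceForm.
Variable C : comNzRingType.

Lemma pairing_tr k (P X : 'M[C]_k) : pairing P X = \tr (P^T *m X).
Proof.
rewrite mxtrace_mulC /pairing /mxtrace; apply: eq_bigr => i _; rewrite mxE.
by apply: eq_bigr => j _; rewrite mxE mulrC.
Qed.

Lemma pairing0r k (P : 'M[C]_k) : pairing P 0 = 0.
Proof. by rewrite pairing_tr mulmx0 mxtrace0. Qed.

Lemma trace_nondeg p q (X : 'M[C]_(p, q)) :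
  (forall M : 'M_(q, p), \tr (X *m M) = 0) -> X = 0.
Proof.
move=> h; apply/matrixP => i j; rewrite [RHS]mxE -(h (delta_mx j i)).
rewrite /mxtrace (bigD1 i) //= big1 ?addr0.
  rewrite mxE (bigD1 j) //= big1 ?addr0; first by rewrite mxE !eqxx mulr1.
  by move=> l hl; rewrite mxE (negbTE hl) mulr0.
by move=> k hk; rewrite mxE big1 // => l _; rewrite mxE (negbTE hk) andbF mulr0.
Qed.

End TraceForm.

Ltac simp0 := rewrite ?(mulmx0, mul0mx, subrr, oppr0, pairing0r, mxtrace0,
  addr0, add0r, sub0r, subr0).

Section Seaweed.
Variables (C : fieldType) (n m : nat).

Definition seaweed_mx (A : 'M[C]_n) (B : 'M[C]_(m, n)) (Cm : 'M[C]_m)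
    (D : 'M[C]_n) (E : 'M[C]_(n, m)) (F : 'M[C]_n) : 'M[C]_(n + m + n) :=
  block_mx (block_mx A 0 B Cm) 0 (row_mx D E) F.

Lemma seaweed_mx_in A B Cm D E F : seaweed C n m (seaweed_mx A B Cm D E F).
Proof.
move=> i j; rewrite -(splitK i) -(splitK j) /seaweed_mx.
case: (split i) => i'; case: (split j) => j' /= hc;
  rewrite ?block_mxEul ?block_mxEur ?block_mxEdl ?block_mxEdr;
  try (exfalso; move: hc (ltn_ord i') (ltn_ord j'); lia); try by rewrite mxE.
move: hc; rewrite -(splitK i') -(splitK j').
case: (split i') => i''; case: (split j') => j'' /= hc;
  rewrite ?block_mxEul ?block_mxEur ?block_mxEdl ?block_mxEdr;
  try (exfalso; move: hc (ltn_ord i'') (ltn_ord j''); lia); try by rewrite mxE.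
Qed.

Lemma seaweed_decomp Z : seaweed C n m Z ->
  exists A B Cm D E F, Z = seaweed_mx A B Cm D E F.
Proof.
move=> hZ.
have h1 : ursubmx Z = 0.
  apply/matrixP => i j; rewrite !mxE; apply: hZ.
  by rewrite /= ltn_ord leq_addr orbT.
have h2 : ursubmx (ulsubmx Z) = 0.
  by apply/matrixP => i j; rewrite !mxE; apply: hZ; rewrite /= ltn_ord leq_addr.
exists (ulsubmx (ulsubmx Z)), (dlsubmx (ulsubmx Z)), (drsubmx (ulsubmx Z)),
  (lsubmx (dlsubmx Z)), (rsubmx (dlsubmx Z)), (drsubmx Z).
by rewrite /seaweed_mx -h2 submxK hsubmxK -h1 submxK.
Qed.

Lemma blockdiag3E (X : 'M[C]_n) (Y : 'M[C]_m) (Z : 'M[C]_n) :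
  blockdiag3 X Y Z = seaweed_mx X 0 Y 0 0 Z.
Proof. by rewrite /seaweed_mx /blockdiag3 row_mx0. Qed.

End Seaweed.

Section CoefficientMatrix.
Variables (C : fieldType) (n m : nat).

(* Psi_K(P,Q): coefficient matrix of the forms Phi (K = 1) and Phi^a
   (K = A_n) of the paper. *)
Definition coefmx (K P : 'M[C]_n) (Q : 'M[C]_m) : 'M[C]_(n + m + n) :=
  block_mx (block_mx P 0 0 Q) 0 (row_mx K 0) (K *m P *m K^T).

Lemma pairing_coefmx_lie K P Q A A' B B' Cm Cm' D D' E E' F F' :
  pairing (coefmx K P Q)
    (lie (seaweed_mx A B Cm D E F) (seaweed_mx A' B' Cm' D' E' F')) =
    pairing P (lie A A') + pairing Q (lie Cm Cm')
    + pairing (K *m P *m K^T) (lie F F')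
    + \tr (K^T *m (D *m A' + E *m B' + F *m D' - (D' *m A + E' *m B + F' *m D))).
Proof.
rewrite !pairing_tr /coefmx /seaweed_mx !mulmx_block !tr_block_mx !trmx0.
rewrite !mul_row_block ?mulmx0 ?mul0mx ?addr0 ?add0r !opp_block_mx !add_block_mx.
rewrite ?mulmx_block ?tr_block_mx ?mxtrace_block !mul0mx !subrr !mulmx0 !addr0.
rewrite !add0r tr_row_mx trmx0 !mul_mx_row !add_row_mx opp_row_mx add_row_mx.
rewrite mul_col_row mxtraceD mxtrace_block !mul0mx ?mxtrace0 ?addr0.
by rewrite mxtrace_block mxtrace0 addr0 -!addrA; congr (_ + (_ + _)); exact: addrC.
Qed.

End CoefficientMatrix.

Section Orthogonal.
Variables (C : fieldType) (n : nat) (K : 'M[C]_n).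
Hypothesis orthK : K^T *m K = 1%:M.

(* Over a field a one-sided inverse is two-sided. *)
Lemma orthK_r : K *m K^T = 1%:M.
Proof. exact: mulmx1C. Qed.

Local Notation conj X := (K *m X *m K^T).

Lemma conjM (X Y : 'M[C]_n) : conj X *m conj Y = conj (X *m Y).
Proof. by rewrite !mulmxA -(mulmxA _ K^T) orthK mulmx1. Qed.

Lemma conjK (X : 'M[C]_n) : conj (K^T *m X *m K) = X.
Proof. by rewrite !mulmxA orthK_r mul1mx -mulmxA orthK_r mulmx1. Qed.

Lemma pairing_conj (P X Y : 'M[C]_n) :
  pairing (conj P) (lie (conj X) (conj Y)) = pairing P (lie X Y).
Proof.
rewrite !pairing_tr !conjM -mulmxBl -mulmxBr !trmx_mul trmxK.
rewrite !mulmxA mxtrace_mulC !mulmxA orthK mul1mx.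
by rewrite -(mulmxA P^T) orthK mulmx1.
Qed.

End Orthogonal.

Section Kernel.
Variables (C : fieldType) (n m : nat) (K P : 'M[C]_n) (Q : 'M[C]_m).
Hypothesis orthK : K^T *m K = 1%:M.
(* Characteristic different from 2 is needed to get D = 0. *)
Hypothesis two_neq0 : 2%:R != 0 :> C.
Local Notation conj X := (K *m X *m K^T).
Local Notation sw := (seaweed_mx (C := C) (n := n) (m := m)).

Lemma kerB_coefmx_lie A B Cm D E F :
  kerB (seaweed C n m) (coefmx K P Q) (sw A B Cm D E F) ->
  forall A' B' Cm' D' E' F',
    pairing P (lie A A') + pairing Q (lie Cm Cm') + pairing (conj P) (lie F F')
    + \tr (K^T *m (D *m A' + E *m B' + F *m D' - (D' *m A + E' *m B + F' *m D)))
    = 0.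
Proof.
move=> [_ hker] *; rewrite -pairing_coefmx_lie.
exact: hker (seaweed_mx_in _ _ _ _ _ _).
Qed.

(* Testing against Z' with a single nonzero block shows that a kernel
   element is block diagonal with last block K A K^T. *)
Lemma kerB_coefmx_shape A B Cm D E F :
  kerB (seaweed C n m) (coefmx K P Q) (sw A B Cm D E F) ->
  [/\ B = 0, E = 0, D = 0 & F = conj A].
Proof.
move=> /kerB_coefmx_lie key.
have lcancel p (X : 'M[C]_(n, p)) : K^T *m X = 0 -> X = 0.
  by move/(congr1 (mulmx K)); rewrite mulmxA orthK_r // mul1mx mulmx0.
have hF : F = conj A.
  have hKF : K^T *m F - A *m K^T = 0.
    apply: trace_nondeg => M; have := key 0 0 0 M 0 0; simp0.
    rewrite mulmxBl mulmxBr !raddfB /= !mulmxA.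
    by rewrite [\tr (K^T *m M *m A)]mxtrace_mulC mulmxA.
  move/eqP: hKF; rewrite subr_eq0 => /eqP/(congr1 (mulmx K)).
  by rewrite mulmxA orthK_r // mul1mx mulmxA.
have hE : E = 0.
  apply/lcancel/trace_nondeg => M; have := key 0 M 0 0 0 0; simp0.
  by rewrite mulmxA.
have hB : B = 0.
  have hBK : B *m K^T = 0.
    apply/trace_nondeg => M; have := key 0 0 0 0 M 0; simp0.
    rewrite mulmxN raddfN /= mulmxA mxtrace_mulC mulmxA => /eqP.
    by rewrite oppr_eq0 => /eqP.
  by move/(congr1 (mulmx^~ K)): hBK; rewrite -mulmxA orthK mulmx1 mul0mx.
(* Z' = M (+) 0 (+) 0 and Z' = 0 (+) 0 (+) K M K^T give tr(K^T D M) with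
   opposite signs and the same diagonal contribution. *)
subst F E B; split=> //; apply/lcancel/trace_nondeg => M.
have := key M 0 0 0 0 0; have := key 0 0 0 0 0 (conj M); simp0.
rewrite pairing_conj // mulmxN raddfN /= !mulmxA orthK mul1mx.
rewrite -[M *m K^T *m D]mulmxA [\tr (M *m _)]mxtrace_mulC.
move=> /eqP; rewrite subr_eq add0r => /eqP ->; rewrite -mulr2n => /eqP.
by rewrite -mulr_natr mulf_eq0 (negbTE two_neq0) orbF => /eqP.
Qed.

Lemma kerB_coefmx Z :
  kerB (seaweed C n m) (coefmx K P Q) Z <-> exists X Y,
    [/\ kerB (gl C n) P X, kerB (gl C m) Q Y & Z = blockdiag3 X Y (conj X)].
Proof.
split=> [hZ | [X [Y [[_ hX] [_ hY] ->]]]].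
  have [A [B [Cm [D [E [F eZ]]]]]] := seaweed_decomp hZ.1; subst Z.
  have [eB eE eD eF] := kerB_coefmx_shape hZ; subst B E D F.
  have key := kerB_coefmx_lie hZ.
  exists A, Cm; split; last by rewrite blockdiag3E.
  - by split=> // Y _; have := key Y 0 0 0 0 0; simp0.
  - by split=> // Y _; have := key 0 0 Y 0 0 0; simp0.
rewrite blockdiag3E; split; first exact: seaweed_mx_in.
move=> W /seaweed_decomp [A' [B' [Cm' [D' [E' [F' ->]]]]]].
rewrite pairing_coefmx_lie -[F'](conjK orthK) pairing_conj // hX // hY // hX //.
simp0; rewrite mulmxBr raddfB /= !mulmxA orthK mul1mx.
by rewrite -[X *m K^T *m D']mulmxA mxtrace_mulC subrr.
Qed.
End Kernel.

Section DirectSum.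
Variables (C : fieldType) (k1 k2 N : nat).
Variables (g1 : {linear 'M[C]_k1 -> 'M[C]_N}) (g2 : {linear 'M[C]_k2 -> 'M[C]_N}).
Hypothesis g_inj : forall X Y, g1 X + g2 Y = 0 -> X = 0 /\ Y = 0.

(* If T is the direct image of S1 x S2 under (X, Y) |-> g1 X + g2 Y, a basis
   of T is obtained by stacking the images of bases of S1 and S2. *)
Lemma has_dim_direct_sum (S1 : 'M[C]_k1 -> Prop) (S2 : 'M[C]_k2 -> Prop)
    (T : 'M[C]_N -> Prop) d1 d2 :
  (forall Z, T Z <-> exists X Y, [/\ S1 X, S2 Y & Z = g1 X + g2 Y]) ->
  has_dim S1 d1 -> has_dim S2 d2 -> has_dim T (d1 + d2).
Proof.
move=> hT [B1 [fr1 hS1]] [B2 [fr2 hS2]].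
have sumE (u : 'rV_d1) (v : 'rV_d2) :
    row_mx u v *m col_mx (B1 *m lin_mx g1) (B2 *m lin_mx g2) =
    mxvec (g1 (vec_mx (u *m B1)) + g2 (vec_mx (v *m B2))).
  by rewrite mul_row_col !mulmxA !mul_rV_lin raddfD.
exists (col_mx (B1 *m lin_mx g1) (B2 *m lin_mx g2)); split.
  apply/inj_row_free => w; rewrite -[w]hsubmxK sumE => /eqP.
  rewrite mxvec_eq0 => /eqP /g_inj [/(canRL vec_mxK) e1 /(canRL vec_mxK) e2].
  move: e1 e2; rewrite !linear0 -(mul0mx _ B1) -(mul0mx _ B2).
  by move=> /(row_free_inj fr1) -> /(row_free_inj fr2) ->; rewrite row_mx0.
move=> Z; rewrite hT; split.
  case=> X [Y [/hS1/submxP [u /(canRL mxvecK) ->]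
               /hS2/submxP [v /(canRL mxvecK) ->] ->]].
  by apply/submxP; exists (row_mx u v); rewrite sumE.
case/submxP => w hw.
exists (vec_mx (lsubmx w *m B1)), (vec_mx (rsubmx w *m B2)); split.
- by apply/hS1; rewrite vec_mxK submxMl.
- by apply/hS2; rewrite vec_mxK submxMl.
by apply: (can_inj mxvecK); rewrite hw -[w]hsubmxK sumE !row_mxKl row_mxKr.
Qed.

End DirectSum.

Section Embeddings.
Variables (C : fieldType) (n m : nat) (K : 'M[C]_n).

Lemma blockdiag3_linear a (X X' Z Z' : 'M[C]_n) (Y Y' : 'M[C]_m) :
  a *: blockdiag3 X Y Z + blockdiag3 X' Y' Z' =
  blockdiag3 (a *: X + X') (a *: Y + Y') (a *: Z + Z').
Proof. by rewrite /blockdiag3 !scale_block_mx !add_block_mx !scaler0 !addr0. Qed.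

Lemma blockdiag3_eq0 (X Z : 'M[C]_n) (Y : 'M[C]_m) :
  blockdiag3 X Y Z = 0 -> [/\ X = 0, Y = 0 & Z = 0].
Proof.
rewrite /blockdiag3 -[0 in RHS]block_mx0 => /eq_block_mx [h _ _ ->].
by move: h; rewrite -block_mx0 => /eq_block_mx [-> _ _ ->].
Qed.

(* The linear maps X |-> X (+) 0 (+) K X K^T and Y |-> 0 (+) Y (+) 0, whose
   sum maps ker B_P x ker B_Q onto ker B_Psi. *)
Definition outer_embed (X : 'M[C]_n) : 'M[C]_(n + m + n) :=
  blockdiag3 X 0 (K *m X *m K^T).
Definition middle_embed (Y : 'M[C]_m) : 'M[C]_(n + m + n) := blockdiag3 0 Y 0.

Fact outer_embed_is_linear : linear outer_embed.
Proof.
move=> a X X'; rewrite /outer_embed blockdiag3_linear scaler0 addr0.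
by rewrite mulmxDr mulmxDl -scalemxAr -scalemxAl.
Qed.
HB.instance Definition _ := GRing.isLinear.Build C 'M[C]_n 'M[C]_(n + m + n) _
  outer_embed outer_embed_is_linear.

Fact middle_embed_is_linear : linear middle_embed.
Proof. by move=> a Y Y'; rewrite /middle_embed blockdiag3_linear scaler0 addr0. Qed.
HB.instance Definition _ := GRing.isLinear.Build C 'M[C]_m 'M[C]_(n + m + n) _
  middle_embed middle_embed_is_linear.

Lemma embed_sum X Y :
  outer_embed X + middle_embed Y = blockdiag3 X Y (K *m X *m K^T).
Proof.
rewrite -(scale1r (outer_embed X)) /outer_embed /middle_embed blockdiag3_linear.
by rewrite !scale1r !addr0 add0r.
Qed.

Lemma embed_direct X Y : outer_embed X + middle_embed Y = 0 -> X = 0 /\ Y = 0.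
Proof. by rewrite embed_sum => /blockdiag3_eq0 [-> -> _]. Qed.
End Embeddings.

Lemma has_dim_kerB_coefmx (C : fieldType) (n m : nat) (K P : 'M[C]_n)
    (Q : 'M[C]_m) d1 d2 :
  K^T *m K = 1%:M -> 2%:R != 0 :> C ->
  has_dim (kerB (gl C n) P) d1 -> has_dim (kerB (gl C m) Q) d2 ->
  has_dim (kerB (seaweed C n m) (coefmx K P Q)) (d1 + d2).
Proof.
move=> orthK two_neq0; apply: (has_dim_direct_sum (@embed_direct _ _ m K)) => Z.
rewrite kerB_coefmx //; split=> -[X [Y [hX hY ->]]]; exists X, Y; split=> //;
  by rewrite embed_sum.
Qed.

Section AntiIdentity.
Variables (C : nzRingType) (n : nat).
Local Notation J := (antiId C n).

Lemma antiIdE i j : J i j = (j == rev_ord i)%:R.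
Proof.
rewrite mxE; suff -> : (i + j == n.-1)%N = (j == rev_ord i) by case: eqP.
by rewrite -val_eqE /=; move: (ltn_ord i) (ltn_ord j) => hi hj; apply/eqP/eqP; lia.
Qed.

Lemma antiId_sym : J^T = J.
Proof.
apply/matrixP => i j; rewrite mxE !antiIdE.
suff -> : (j == rev_ord i) = (i == rev_ord j) by [].
by apply/idP/idP => /eqP ->; rewrite rev_ordK.
Qed.

Lemma mul_antiId (X : 'M[C]_n) : J *m X = \matrix_(i, j) X (rev_ord i) j.
Proof.
apply/matrixP => i j; rewrite !mxE (bigD1 (rev_ord i)) //= big1 ?addr0.
  by rewrite antiIdE eqxx mul1r.
by move=> k hk; rewrite antiIdE (negbTE hk) mul0r.
Qed.

Lemma mul_mx_antiId (X : 'M[C]_n) : X *m J = \matrix_(i, j) X i (rev_ord j).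
Proof.
apply/matrixP => i j; rewrite !mxE (bigD1 (rev_ord j)) //= big1 ?addr0.
  by rewrite antiIdE rev_ordK eqxx mulr1.
by move=> k hk; rewrite antiIdE; case: eqP => [hj | _]; rewrite ?mulr0 //;
  case/eqP: hk; rewrite hj rev_ordK.
Qed.

Lemma antiId_orth : J^T *m J = 1%:M.
Proof.
by apply/matrixP => i j; rewrite antiId_sym mul_antiId mxE antiIdE rev_ordK mxE eq_sym.
Qed.

Lemma revmx_conj (X : 'M[C]_n) : revmx X = J *m X *m J^T.
Proof.
by apply/matrixP => i j; rewrite antiId_sym mul_mx_antiId mul_antiId !mxE.
Qed.
End AntiIdentity.

Theorem mainTheorem14 (R : rcfType) (n m : nat) (Hn : (1 <= n)%N)
    (P : 'M[R[i]]_n) (Q : 'M[R[i]]_m) :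
  (forall Z : 'M[R[i]]_(n + m + n),
     kerB (seaweed R[i] n m) (PhiM P Q) Z <->
     exists (X : 'M[R[i]]_n) (Y : 'M[R[i]]_m),
       [/\ kerB (gl R[i] n) P X, kerB (gl R[i] m) Q Y & Z = blockdiag3 X Y X])
  /\
  (forall Z : 'M[R[i]]_(n + m + n),
     kerB (seaweed R[i] n m) (PhiaM P Q) Z <->
     exists (X : 'M[R[i]]_n) (Y : 'M[R[i]]_m),
       [/\ kerB (gl R[i] n) P X, kerB (gl R[i] m) Q Y &
           Z = blockdiag3 X Y (revmx X)])
  /\
  (forall d1 d2 : nat,
     has_dim (kerB (gl R[i] n) P) d1 ->
     has_dim (kerB (gl R[i] m) Q) d2 ->
     has_dim (kerB (seaweed R[i] n m) (PhiM P Q)) (d1 + d2) /\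
     has_dim (kerB (seaweed R[i] n m) (PhiaM P Q)) (d1 + d2)).
Proof.
have two_neq0 : 2%:R != 0 :> R[i] by rewrite pnatr_eq0.
have orth1 : (1%:M : 'M[R[i]]_n)^T *m 1%:M = 1%:M by rewrite trmx1 mulmx1.
have conj1 (X : 'M[R[i]]_n) : 1%:M *m X *m 1%:M^T = X.
  by rewrite trmx1 mulmx1 mul1mx.
have PhiE : PhiM P Q = coefmx 1%:M P Q by rewrite /coefmx conj1.
have PhiaE : PhiaM P Q = coefmx (antiId R[i] n) P Q.
  by rewrite /coefmx -revmx_conj.
split; [|split].
- move=> Z; rewrite PhiE kerB_coefmx //.
  by split=> -[X [Y [hX hY ->]]]; exists X, Y; split; rewrite ?conj1.
- move=> Z; rewrite PhiaE kerB_coefmx ?antiId_orth //.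
  by split=> -[X [Y [hX hY ->]]]; exists X, Y; (split; [| |rewrite -revmx_conj]).
- move=> d1 d2 h1 h2; rewrite PhiE PhiaE.
  by split; apply: has_dim_kerB_coefmx => //; exact: antiId_orth.
Qed.
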